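(* Let $p$ be an odd prime, $n\ge 2$, $N$ a positive integer, and $(\mathbf J,\mathbf B,\mathbf C)\in\mathbb{Z}_p^{n(n-1)/2+2n}$. Then $$Z_n(\mathbf J,\mathbf B,\mathbf C;p)=C_n'\,Z_{n-1}(\mathbf J',\mathbf B^+,\mathbf C^+;p)+B_n'\,Z_{n-1}(\mathbf J',\mathbf B^-,\mathbf C^-;p)$$ in $\mathbb{Z}_p$, where $\mathbf J'\in\mathbb{Z}_p^{(n-1)(n-2)/2}$ has $J'_{ij}=J_{ij}$ for $1\le i<j\le n-1$; $\mathbf B^\pm,\mathbf C^\pm\in\mathbb{Z}_p^{n-1}$ are given for $1\le i\le n-1$ by $B^+_i=2^{-N}B_iJ_{in}$, $B^-_i=B_i$, $C^+_i=C_i$, $C^-_i=2^{-N}C_iJ_{in}$; and $C_n'=C_n2^{(n-2)N}$, $B_n'=B_n2^{(n-2)N}$.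
   Context: All arithmetic is in $\mathbb{Z}_p$, and $2^{-N}$ denotes $g^N$ where $g$ is the multiplicative inverse of $2$ modulo $p$. For $m\ge1$ and $\boldsymbol\sigma\in\{-1,1\}^m$, let $I_m(\boldsymbol\sigma)=|\{(i,j):1\le i<j\le m,\ \sigma_i\ne\sigma_j\}|$ and $f(m,\boldsymbol\sigma)=\frac{m(m-1)}{2}-m-I_m(\boldsymbol\sigma)$. For an input $(\mathbf J,\mathbf B,\mathbf C)$ with $\mathbf J=(J_{ij}:1\le i<j\le m)$, $\mathbf B=(B_i)_{i\le m}$, $\mathbf C=(C_i)_{i\le m}$, define $$Z_m(\mathbf J,\mathbf B,\mathbf C;p)=\sum_{\boldsymbol\sigma\in\{-1,1\}^m}2^{Nf(m,\boldsymbol\sigma)}\Big(\prod_{i:\sigma_i=-1}B_i\Big)\Big(\prod_{i:\sigma_i=+1}C_i\Big)\Big(\prod_{i<j:\sigma_i\ne\sigma_j}J_{ij}\Big)\pmod p,$$ with powers of $2$ (possibly negative exponents) interpreted in $\mathbb{Z}_p$. *)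

From HB Require Import structures.
From mathcomp Require Import all_boot all_order all_algebra.
Set Implicit Arguments. Unset Strict Implicit. Unset Printing Implicit Defensive.
Import Order.TTheory GRing.Theory Num.Theory.
Local Open Scope ring_scope.

(* Spin configurations sigma in {-1,1}^m are encoded as {ffun 'I_m -> bool},
   with true = +1 and false = -1. Site i : 'I_m is the paper's index i+1.
   Inputs J, B, C are 1-indexed families (J i j used for 1 <= i < j <= m). *)

Definition Icount (m : nat) (s : {ffun 'I_m -> bool}) : nat :=
  #|[set ij : 'I_m * 'I_m | (ij.1 < ij.2)%N && (s ij.1 != s ij.2)]|.

Definition fexp (m : nat) (s : {ffun 'I_m -> bool}) : int :=
  ((m * (m - 1)) %/ 2)%:Z - m%:Z - (Icount s)%:Z.

Definition Zpart (R : unitRingType) (m N : nat)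
  (J : nat -> nat -> R) (B C : nat -> R) : R :=
  \sum_(s : {ffun 'I_m -> bool})
     (2 : R) ^ (N%:Z * fexp s)
     * (\prod_(i : 'I_m | ~~ s i) B i.+1)
     * (\prod_(i : 'I_m | s i) C i.+1)
     * (\prod_(ij : 'I_m * 'I_m | (ij.1 < ij.2)%N && (s ij.1 != s ij.2))
          J ij.1.+1 ij.2.+1).

From mathcomp Require Import all_boot all_order all_algebra.
Import GRing.Theory.
From mathcomp Require Import zify ring.
Set Implicit Arguments. Unset Strict Implicit. Unset Printing Implicit Defensive.
Local Open Scope ring_scope.

(* Split a configuration on n sites into the configuration t of the first n-1
   sites and the spin b of the last one.  The pairs (i, n) that disagree are
   exactly the sites with t i != b; each contributes a factor J i n and, by
   raising I by one, a factor 2^-N.  These factors are absorbed into B when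
   b = +1 and into C when b = -1, while m(m-1)/2 - m grows by n-2 when m goes
   from n-1 to n, which gives the prefactor 2^((n-2)N). *)

Lemma big_ltn_pair_ord_recr (R : Type) (idx : R) (op : Monoid.com_law idx) m
    (P : 'I_m.+1 -> 'I_m.+1 -> bool) (F : 'I_m.+1 -> 'I_m.+1 -> R) :
  let w := widen_ord (leqnSn m) in
  \big[op/idx]_(ij : 'I_m.+1 * 'I_m.+1 | (ij.1 < ij.2)%N && P ij.1 ij.2)
      F ij.1 ij.2 =
  op (\big[op/idx]_(ij : 'I_m * 'I_m | (ij.1 < ij.2)%N && P (w ij.1) (w ij.2))
        F (w ij.1) (w ij.2))
     (\big[op/idx]_(i < m | P (w i) ord_max) F (w i) ord_max).
Proof.
move=> w.
have big_pair k (Q : 'I_k -> 'I_k -> bool) (G : 'I_k -> 'I_k -> R) :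
    \big[op/idx]_(ij : 'I_k * 'I_k | Q ij.1 ij.2) G ij.1 ij.2 =
    \big[op/idx]_i \big[op/idx]_j (if Q i j then G i j else idx).
  by rewrite pair_bigA big_mkcond.
rewrite (big_pair _ (fun i j => (i < j)%N && P i j) F).
rewrite (big_pair _ (fun i j => (i < j)%N && P (w i) (w j))
  (fun i j => F (w i) (w j))).
rewrite big_ord_recr /=.
rewrite [X in op _ X]big1 ?Monoid.mulm1; last first.
  by move=> j _; rewrite ltnNge -ltnS ltn_ord.
under eq_bigr => i _ do rewrite big_ord_recr /=.
rewrite big_split /=; congr (op _ _).
by rewrite [RHS]big_mkcond; apply: eq_bigr => i _; rewrite ltn_ord.
Qed.

Section SnocSpin.

Variable m : nat.
Implicit Types (b : bool) (t : {ffun 'I_m -> bool}).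

Definition snoc_spin b t : {ffun 'I_m.+1 -> bool} :=
  [ffun i => if unlift ord_max i is Some j then t j else b].

Lemma snoc_spin_max b t : snoc_spin b t ord_max = b.
Proof. by rewrite ffunE unlift_none. Qed.

Lemma widen_ord_max_lift (j : 'I_m) : widen_ord (leqnSn m) j = lift ord_max j.
Proof. by apply: val_inj; rewrite /= /bump leqNgt ltn_ord. Qed.

Lemma snoc_spin_widen b t j : snoc_spin b t (widen_ord (leqnSn m) j) = t j.
Proof. by rewrite widen_ord_max_lift ffunE liftK. Qed.

Lemma sum_snoc_spin (R : nmodType) (F : {ffun 'I_m.+1 -> bool} -> R) :
  \sum_(s : {ffun 'I_m.+1 -> bool}) F s =
  \sum_(b : bool) \sum_(t : {ffun 'I_m -> bool}) F (snoc_spin b t).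
Proof.
rewrite pair_bigA /=.
pose unsnoc (s : {ffun 'I_m.+1 -> bool}) :=
  (s ord_max, [ffun j => s (widen_ord (leqnSn m) j)]).
rewrite (reindex (fun bt => snoc_spin bt.1 bt.2)) //.
exists unsnoc => [[b t] _ | s _].
  rewrite /unsnoc /= snoc_spin_max; congr pair.
  by apply/ffunP => j; rewrite ffunE snoc_spin_widen.
apply/ffunP => i; rewrite ffunE.
by case: unliftP => [j ->|->] //; rewrite ffunE widen_ord_max_lift.
Qed.

Lemma prod_snoc_spin (R : comNzRingType) (P : pred bool) (F : nat -> R) b t :
  \prod_(i < m.+1 | P (snoc_spin b t i)) F i.+1 =
  (\prod_(i < m | P (t i)) F i.+1) * (if P b then F m.+1 else 1).
Proof.
rewrite big_mkcond big_ord_recr /= snoc_spin_max [in RHS]big_mkcond.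
by congr (_ * _); apply: eq_bigr => i _; rewrite snoc_spin_widen.
Qed.

Lemma prod_disagree_snoc_spin (R : comNzRingType) (J : nat -> nat -> R) b t :
  \prod_(ij : 'I_m.+1 * 'I_m.+1 |
         (ij.1 < ij.2)%N && (snoc_spin b t ij.1 != snoc_spin b t ij.2))
    J ij.1.+1 ij.2.+1 =
  (\prod_(ij : 'I_m * 'I_m | (ij.1 < ij.2)%N && (t ij.1 != t ij.2))
     J ij.1.+1 ij.2.+1) * \prod_(i < m | t i != b) J i.+1 m.+1.
Proof.
rewrite (big_ltn_pair_ord_recr _
  (fun i j => snoc_spin b t i != snoc_spin b t j) (fun i j => J i.+1 j.+1)) /=.
by congr (_ * _); apply: eq_bigl => x; rewrite ?snoc_spin_widen ?snoc_spin_max.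
Qed.

Lemma Icount_snoc_spin b t :
  Icount (snoc_spin b t) = (Icount t + #|[set i | t i != b]|)%N.
Proof.
rewrite /Icount -!sum1dep_card (big_ltn_pair_ord_recr _
  (fun i j => snoc_spin b t i != snoc_spin b t j) (fun _ _ => 1%N)) /=.
by congr addn; apply: eq_bigl => x; rewrite ?snoc_spin_widen ?snoc_spin_max.
Qed.

Lemma fexp_snoc_spin b t : (0 < m)%N ->
  fexp (snoc_spin b t) = fexp t + (m - 1)%N%:Z - #|[set i | t i != b]|%:Z.
Proof.
have half_succ : ((m.+1 * (m.+1 - 1)) %/ 2 = (m * (m - 1)) %/ 2 + m)%N.
  by rewrite !divn2 !subn1 -!bin2 binS bin1 addnC.
by move=> m_gt0; rewrite /fexp Icount_snoc_spin half_succ; lia.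
Qed.

End SnocSpin.

Section Recursion.

Variables (R : fieldType) (N : nat) (J : nat -> nat -> R).
Hypothesis two_neq0 : (2 : R) != 0.

Definition Zterm m (B C : nat -> R) (s : {ffun 'I_m -> bool}) : R :=
  (2 : R) ^ (N%:Z * fexp s)
  * (\prod_(i : 'I_m | ~~ s i) B i.+1)
  * (\prod_(i : 'I_m | s i) C i.+1)
  * (\prod_(ij : 'I_m * 'I_m | (ij.1 < ij.2)%N && (s ij.1 != s ij.2))
       J ij.1.+1 ij.2.+1).

Lemma ZpartE m B C :
  Zpart m N J B C = \sum_(s : {ffun 'I_m -> bool}) Zterm B C s.
Proof. by []. Qed.

Definition rescale k (F : nat -> R) (i : nat) : R := 2^-1 ^+ N * F i * J i k.

Lemma prod_rescale m k (P : pred 'I_m) (F : nat -> R) :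
  \prod_(i < m | P i) rescale k F i.+1 =
  (\prod_(i < m | P i) F i.+1) * \prod_(i < m | P i) (2^-1 ^+ N * J i.+1 k).
Proof.
by rewrite -big_split; apply: eq_bigr => i _; rewrite /rescale /= mulrAC mulrC.
Qed.

Lemma pow2_fexp_snoc_spin m b (t : {ffun 'I_m -> bool}) : (0 < m)%N ->
  (2 : R) ^ (N%:Z * fexp (snoc_spin b t)) =
  2 ^ (N%:Z * fexp t) * 2 ^+ ((m - 1) * N)
  * (2^-1 ^+ N) ^+ #|[set i | t i != b]|.
Proof.
move=> m_gt0; rewrite fexp_snoc_spin //.
set k := #|_|.
rewrite (_ : N%:Z * _ = N%:Z * fexp t + ((m - 1) * N)%N%:Z - (N * k)%N%:Z).
  by rewrite !expfzDr // -exprnN -exprnP -exprM exprVn.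
by rewrite !PoszM; ring.
Qed.

Lemma expr_card_mul_prod_neq m k (x : R) b (t : {ffun 'I_m -> bool}) :
  x ^+ #|[set i | t i != b]| * \prod_(i < m | t i != b) J i.+1 k =
  \prod_(i < m | if b then ~~ t i else t i) (x * J i.+1 k).
Proof.
rewrite big_split -prodr_const /=.
by congr (_ * _); apply: eq_bigl => i; rewrite ?inE; case: b; case: (t i).
Qed.

Lemma Zterm_snoc_spin m B C (b : bool) (t : {ffun 'I_m -> bool}) : (0 < m)%N ->
  Zterm B C (snoc_spin b t) =
  (if b then C m.+1 else B m.+1) * 2 ^+ ((m - 1) * N) *
  Zterm (if b then rescale m.+1 B else B) (if b then C else rescale m.+1 C) t.
Proof.
move=> m_gt0; rewrite /Zterm pow2_fexp_snoc_spin // prod_disagree_snoc_spin.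
rewrite (prod_snoc_spin negb) (prod_snoc_spin id).
case: b => /=; rewrite prod_rescale.
  by rewrite -(expr_card_mul_prod_neq _ _ true); ring.
by rewrite -(expr_card_mul_prod_neq _ _ false); ring.
Qed.

End Recursion.

Lemma Fp_two_neq0 p : prime p -> odd p -> (2 : 'F_p) != 0.
Proof.
move=> p_pr p_odd; rewrite -(dvdn_pcharf (pchar_Fp p_pr)).
apply: contraL p_odd => /dvdn_leq p_le2.
by have /eqP -> : p == 2%N by rewrite eqn_leq p_le2 ?prime_gt1.
Qed.

Theorem lemma1 (p : nat) (Hp : prime p) (Hodd : odd p) (n N : nat)
  (Hn : (2 <= n)%N) (HN : (0 < N)%N)
  (J : nat -> nat -> 'F_p) (B C : nat -> 'F_p) :
  let g : 'F_p := (2 : 'F_p)^-1 in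
  let J' := fun i j => J i j in
  let Bp := fun i => g ^+ N * B i * J i n in
  let Bm := fun i => B i in
  let Cp := fun i => C i in
  let Cm := fun i => g ^+ N * C i * J i n in
  let Cn' := C n * 2 ^+ ((n - 2) * N) in
  let Bn' := B n * 2 ^+ ((n - 2) * N) in
  Zpart n N J B C =
    Cn' * Zpart n.-1 N J' Bp Cp + Bn' * Zpart n.-1 N J' Bm Cm.
Proof.
have two_neq0 := Fp_two_neq0 Hp Hodd.
case: n Hn => [|[|m]] // _ /=.
rewrite !ZpartE sum_snoc_spin big_bool /= !mulr_sumr.
by congr (_ + _); apply: eq_bigr => t _; rewrite Zterm_snoc_spin.
Qed.
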